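(* Let $\psi$ be a pure state with Hamiltonian $H$ having period $\tau>0$, i.e. $\tau=\inf\{t>0:|\langle\psi|e^{-iHt}|\psi\rangle|=1\}$, with energy reference chosen so that $e^{-iH\tau}|\psi\rangle=|\psi\rangle$. Let $p_\psi(n)=\frac1{2\pi}\int_0^{2\pi}e^{i\theta n}\langle\psi|e^{-iH\tau\theta/2\pi}|\psi\rangle d\theta$, $n\in\mathbb Z$ (the probability that $\psi$ has energy $2\pi n/\tau$), and assume $H$ is bounded below. Then there exists a finite integer $L\ge1$ such that the $L$-fold convolution $p_{\psi^{\otimes L}}=p_\psi*\cdots*p_\psi$ satisfies $$\tfrac12\sum_{n\in\mathbb Z}|p_{\psi^{\otimes L}}(n)-p_{\psi^{\otimes L}}(n+1)|<1.$$
   Context: The distribution $p_{\psi^{\otimes L}}$ is the energy distribution of $\psi^{\otimes L}$ with respect to the non-interacting total Hamiltonian $\sum_{i=1}^L I^{\otimes(i-1)}\otimes H\otimes I^{\otimes(L-i)}$ (in units of $2\pi/\tau$). *)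

From Stdlib Require Import Reals ZArith List.
Open Scope R_scope.

Definition Zseries (f : Z -> R) (S : R) : Prop :=
  exists S1 S2 : R,
    infinite_sum (fun k : nat => f (Z.of_nat k)) S1 /\
    infinite_sum (fun k : nat => f (- Z.of_nat k - 1)%Z) S2 /\
    S = S1 + S2.

(** Finite sum over the integer interval [a, b] (empty if b < a). *)
Definition Zsum (a b : Z) (f : Z -> R) : R :=
  fold_right Rplus 0
    (map (fun j : nat => f (a + Z.of_nat j)%Z) (seq 0 (Z.to_nat (b - a + 1)))).

(** Convolution of f supported on [a, +oo) and g supported on [b, +oo):
    (f * g)(n) = sum_k f(k) g(n-k); only k in [a, n-b] contribute. *)
Definition conv (a b : Z) (f g : Z -> R) (n : Z) : R :=
  Zsum a (n - b)%Z (fun k => f k * g (n - k)%Z).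

(** L-fold convolution power p^{*L} of a distribution p supported on [m, +oo);
    p^{*L} is supported on [L m, +oo).  p^{*0} is the Dirac mass at 0. *)
Fixpoint convpow (m : Z) (p : Z -> R) (L : nat) : Z -> R :=
  match L with
  | O => fun n => if Z.eqb n 0 then 1 else 0
  | S L' => conv (Z.of_nat L' * m)%Z m (convpow m p L') p
  end.

From Stdlib Require Import Reals ZArith List Lia Lra Classical FunctionalExtensionality.
Open Scope R_scope.

(* If the support of p lay in a coset a + gZ with g >= 2, then tau / g would already be a
   period. The differences x' - x of pairs of L-fold sums of support points form a subgroup
   of Z containing every s - a with s, a in the support, so by the first remark it is Z: for
   some L both x and x + 1 are L-fold sums and p^{*L} charges both. Since
   |u - v| = u + v - 2 min(u, v), this overlap keeps sum_n |p^{*L}(n) - p^{*L}(n + 1)|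
   strictly below 2. *)

Lemma Z_ind_from (a : Z) (P : Z -> Prop) :
  P a -> (forall n, (a <= n)%Z -> P n -> P (n + 1)%Z) -> forall n, (a <= n)%Z -> P n.
Proof. intros H0 HS. apply Z.le_ind; auto. intros x y ->; tauto. Qed.

Lemma fold_right_Rplus_init x l : fold_right Rplus x l = fold_right Rplus 0 l + x.
Proof. induction l as [|y l IH]; simpl; [|rewrite IH]; lra. Qed.

Lemma Zsum_empty a b f : (b < a)%Z -> Zsum a b f = 0.
Proof. intros H. unfold Zsum. replace (Z.to_nat (b - a + 1)) with 0%nat by lia. reflexivity. Qed.

Lemma Zsum_succ_r a b f : (a <= b + 1)%Z -> Zsum a (b + 1) f = Zsum a b f + f (b + 1)%Z.
Proof.
  intros H. unfold Zsum.
  replace (Z.to_nat (b + 1 - a + 1)) with (S (Z.to_nat (b - a + 1))) by lia.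
  rewrite seq_S, map_app, fold_right_app, fold_right_Rplus_init; simpl.
  rewrite Rplus_0_r. do 2 f_equal. lia.
Qed.

Lemma Zsum_0 a b : Zsum a b (fun _ => 0) = 0.
Proof. unfold Zsum. induction (seq 0 _) as [|j l IH]; simpl; [|rewrite IH]; lra. Qed.

Lemma Zsum_le a b f g :
  (forall n, (a <= n <= b)%Z -> f n <= g n) -> Zsum a b f <= Zsum a b g.
Proof.
  intros Hfg. unfold Zsum.
  assert (Hl : forall j, In j (seq 0 (Z.to_nat (b - a + 1))) -> f (a + Z.of_nat j)%Z <= g (a + Z.of_nat j)%Z).
  { intros j Hj. apply in_seq in Hj. apply Hfg. lia. }
  induction (seq 0 _) as [|j l IH]; simpl; [lra|].
  apply Rplus_le_compat; auto with datatypes.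
Qed.

Lemma Zsum_ext a b f g :
  (forall n, (a <= n <= b)%Z -> f n = g n) -> Zsum a b f = Zsum a b g.
Proof.
  intros Hfg. apply Rle_antisym; apply Zsum_le; intros n Hn; rewrite Hfg; auto; lra.
Qed.

Lemma Zsum_nonneg a b f : (forall n, 0 <= f n) -> 0 <= Zsum a b f.
Proof. intros Hf. rewrite <- (Zsum_0 a b). apply Zsum_le. auto. Qed.

Lemma Zsum_plus a b f g : Zsum a b (fun n => f n + g n) = Zsum a b f + Zsum a b g.
Proof. unfold Zsum. induction (seq 0 _) as [|j l IH]; simpl; [|rewrite IH]; lra. Qed.

Lemma Zsum_scal a b c f : Zsum a b (fun n => c * f n) = c * Zsum a b f.
Proof. unfold Zsum. induction (seq 0 _) as [|j l IH]; simpl; [|rewrite IH]; lra. Qed.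

Lemma Zsum_shift a b f : Zsum a b (fun n => f (n + 1)%Z) = Zsum (a + 1) (b + 1) f.
Proof.
  unfold Zsum. replace (b + 1 - (a + 1) + 1)%Z with (b - a + 1)%Z by lia.
  f_equal. apply map_ext. intros j. f_equal. lia.
Qed.

Lemma Zsum_singleton x f : Zsum x x f = f x.
Proof.
  replace x with (x - 1 + 1)%Z at 2 by lia.
  rewrite Zsum_succ_r, Zsum_empty, Rplus_0_l by lia. f_equal. lia.
Qed.

Lemma Zsum_split a c b f :
  (a <= c <= b + 1)%Z -> Zsum a b f = Zsum a (c - 1) f + Zsum c b f.
Proof.
  intros [Hac Hcb]. replace b with (c - 1 + (b - (c - 1)))%Z by lia.
  apply (Z_ind_from 0 (fun k => Zsum a (c - 1 + k) f = Zsum a (c - 1) f + Zsum c (c - 1 + k) f));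
    [| | lia].
  - rewrite Z.add_0_r, (Zsum_empty c) by lia. lra.
  - intros k Hk IH. rewrite Z.add_assoc, !Zsum_succ_r, IH by lia. lra.
Qed.

Lemma Zsum_widen a b a' b' f :
  (forall n, 0 <= f n) -> (a' <= a)%Z -> (b <= b')%Z -> Zsum a b f <= Zsum a' b' f.
Proof.
  intros Hf Ha Hb. destruct (Z_lt_le_dec b a) as [Hab|Hab].
  { rewrite Zsum_empty by lia. apply Zsum_nonneg, Hf. }
  rewrite (Zsum_split a' a b'), (Zsum_split a (b + 1) b') by lia.
  replace (b + 1 - 1)%Z with b by lia.
  pose proof (Zsum_nonneg a' (a - 1) f Hf). pose proof (Zsum_nonneg (b + 1) b' f Hf). lra.
Qed.

Lemma Zsum_term_le a b x f : (forall n, 0 <= f n) -> (a <= x <= b)%Z -> f x <= Zsum a b f.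
Proof. intros Hf Hx. rewrite <- Zsum_singleton. apply Zsum_widen; auto; lia. Qed.

Lemma Zsum_symmetric K f :
  Zsum (- Z.of_nat K - 1) (Z.of_nat K) f =
  sum_f_R0 (fun k => f (Z.of_nat k)) K + sum_f_R0 (fun k => f (- Z.of_nat k - 1)%Z) K.
Proof.
  induction K as [|K IH].
  - rewrite (Zsum_split _ 0), !Zsum_singleton by lia. simpl. lra.
  - rewrite !tech5.
    rewrite (Zsum_split _ (- Z.of_nat K - 1)) by lia.
    replace (- Z.of_nat K - 1 - 1)%Z with (- Z.of_nat (S K) - 1)%Z by lia.
    rewrite Zsum_singleton.
    replace (Z.of_nat (S K)) with (Z.of_nat K + 1)%Z by lia.
    rewrite Zsum_succ_r, IH by lia. lra.
Qed.

Lemma infinite_sum_scal u l c : infinite_sum u l -> infinite_sum (fun k => c * u k) (c * l).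
Proof.
  intros Hu. change (Un_cv (fun n => sum_f_R0 (fun k => c * u k) n) (c * l)).
  replace (fun n => sum_f_R0 (fun k => c * u k) n) with (fun n => c * sum_f_R0 u n).
  - apply CV_mult; [|exact Hu].
    intros eps Heps. exists 0%nat. intros. unfold Rdist. rewrite Rminus_diag, Rabs_R0. lra.
  - apply functional_extensionality. intro n. rewrite scal_sum. apply sum_eq. intros; ring.
Qed.

Lemma Zseries_scal f S c : Zseries f S -> Zseries (fun n => c * f n) (c * S).
Proof.
  intros [S1 [S2 [H1 [H2 ->]]]]. exists (c * S1), (c * S2).
  split; [|split]; [apply infinite_sum_scal; exact H1 | apply infinite_sum_scal; exact H2 | ring].
Qed.

Lemma Zseries_zero f S : (forall n, f n = 0) -> Zseries f S -> S = 0.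
Proof.
  intros Hf [S1 [S2 [H1 [H2 ->]]]].
  assert (Hzero : forall u : nat -> R, (forall k, u k = 0) -> infinite_sum u 0).
  { intros u Hu eps Heps. exists 0%nat. intros n _. unfold Rdist.
    rewrite (sum_eq u (fun _ => 0)), sum_cte by auto. rewrite Rmult_0_l, Rminus_0_r, Rabs_R0. lra. }
  rewrite (uniqueness_sum _ S1 0 H1), (uniqueness_sum _ S2 0 H2) by (apply Hzero; auto). lra.
Qed.

Lemma Zsum_le_Zseries f S : (forall n, 0 <= f n) -> Zseries f S -> forall a b, Zsum a b f <= S.
Proof.
  intros Hf [S1 [S2 [H1 [H2 ->]]]] a b.
  assert (Hpartial : forall u l, (forall k, 0 <= u k) -> infinite_sum u l -> forall K, sum_f_R0 u K <= l).
  { intros u l Hu Hl K. apply growing_ineq; [|exact Hl]. intro n. rewrite tech5. specialize (Hu (S n)). lra. }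
  set (K := Z.to_nat (Z.abs a + Z.abs b)).
  apply Rle_trans with (Zsum (- Z.of_nat K - 1) (Z.of_nat K) f); [apply Zsum_widen; auto; lia|].
  rewrite Zsum_symmetric.
  pose proof (Hpartial _ _ (fun k => Hf _) H1 K). pose proof (Hpartial _ _ (fun k => Hf _) H2 K). lra.
Qed.

Lemma Zseries_of_bounded_Zsum f B : (forall n, 0 <= f n) ->
  (forall a b, Zsum a b f <= B) -> exists S, Zseries f S /\ S <= B.
Proof.
  intros Hf HB.
  set (u := fun K => sum_f_R0 (fun k => f (Z.of_nat k)) K).
  set (v := fun K => sum_f_R0 (fun k => f (- Z.of_nat k - 1)%Z) K).
  assert (Hu0 : forall K, 0 <= u K) by (intros; apply cond_pos_sum; auto).
  assert (Hv0 : forall K, 0 <= v K) by (intros; apply cond_pos_sum; auto).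
  assert (Huv : forall K, u K + v K <= B) by (intros K; unfold u, v; rewrite <- Zsum_symmetric; auto).
  assert (Hgu : Un_growing u) by (intro n; unfold u; rewrite tech5; specialize (Hf (Z.of_nat (S n))); lra).
  assert (Hgv : Un_growing v) by (intro n; unfold v; rewrite tech5; specialize (Hf (- Z.of_nat (S n) - 1)%Z); lra).
  destruct (growing_cv u Hgu) as [S1 H1].
  { exists B. intros y [K ->]. specialize (Huv K). specialize (Hv0 K). lra. }
  destruct (growing_cv v Hgv) as [S2 H2].
  { exists B. intros y [K ->]. specialize (Huv K). specialize (Hu0 K). lra. }
  exists (S1 + S2). split; [exists S1, S2; auto|].
  apply Rnot_lt_le. intros HBS.
  destruct (CV_plus u v S1 S2 H1 H2 (S1 + S2 - B)) as [N HN]; [lra|].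
  specialize (HN N (le_n _)). specialize (Huv N). unfold Rdist in HN.
  apply Rabs_def2 in HN. lra.
Qed.

Lemma conv_nonneg a0 b0 f g :
  (forall n, 0 <= f n) -> (forall n, 0 <= g n) -> forall n, 0 <= conv a0 b0 f g n.
Proof. intros Hf Hg n. apply Zsum_nonneg. intros k. apply Rmult_le_pos; auto. Qed.

Lemma Zsum_conv a0 b0 f g a N : (a <= a0 + b0)%Z -> (a - 1 <= N)%Z ->
  Zsum a N (conv a0 b0 f g) = Zsum a0 (N - b0) (fun k => f k * Zsum b0 (N - k) g).
Proof.
  intros Ha HN. replace N with (a - 1 + (N - (a - 1)))%Z by lia.
  apply (Z_ind_from 0 (fun j => Zsum a (a - 1 + j) (conv a0 b0 f g) =
    Zsum a0 (a - 1 + j - b0) (fun k => f k * Zsum b0 (a - 1 + j - k) g))); [| |lia].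
  { rewrite Z.add_0_r, !Zsum_empty by lia. reflexivity. }
  intros j Hj IH. set (M := (a - 1 + j)%Z) in *. rewrite Z.add_assoc; fold M.
  rewrite Zsum_succ_r, IH by lia. unfold conv.
  destruct (Z_lt_le_dec (M + 1 - b0) a0) as [Hl|Hl].
  { rewrite !Zsum_empty by lia. lra. }
  replace (M + 1 - b0)%Z with (M - b0 + 1)%Z by lia.
  rewrite !Zsum_succ_r by lia.
  replace (M + 1 - (M - b0 + 1))%Z with b0 by lia.
  rewrite Zsum_singleton.
  rewrite (Zsum_ext a0 (M - b0) (fun k => f k * Zsum b0 (M + 1 - k) g)
             (fun k => f k * Zsum b0 (M - k) g + f k * g (M + 1 - k)%Z)).
  2:{ intros k Hk. replace (M + 1 - k)%Z with (M - k + 1)%Z by lia.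
      rewrite Zsum_succ_r by lia. ring. }
  rewrite Zsum_plus. lra.
Qed.

Lemma conv_Zsum_le a0 b0 f g A B :
  (forall n, 0 <= f n) -> (forall n, 0 <= g n) ->
  (forall a b, Zsum a b f <= A) -> (forall a b, Zsum a b g <= B) ->
  forall a b, Zsum a b (conv a0 b0 f g) <= A * B.
Proof.
  intros Hf Hg HA HB a b.
  assert (HB0 : 0 <= B) by (rewrite <- (Zsum_empty 1 0 g) by lia; apply HB).
  destruct (Z_lt_le_dec b a) as [Hab|Hab].
  { rewrite Zsum_empty by lia. apply Rmult_le_pos; [rewrite <- (Zsum_empty 1 0 f) by lia|]; auto. }
  apply Rle_trans with (Zsum (Z.min a (a0 + b0)) b (conv a0 b0 f g)).
  { apply Zsum_widen; [apply conv_nonneg; auto|lia|lia]. }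
  rewrite Zsum_conv by lia.
  apply Rle_trans with (Zsum a0 (b - b0) (fun k => B * f k)).
  - apply Zsum_le. intros k _. rewrite Rmult_comm. apply Rmult_le_compat_r; auto.
  - rewrite Zsum_scal, Rmult_comm. apply Rmult_le_compat_r; auto.
Qed.

Lemma convpow_nonneg m p : (forall n, 0 <= p n) -> forall L n, 0 <= convpow m p L n.
Proof.
  intros Hp L. induction L as [|L IH]; intros n.
  - simpl. destruct (n =? 0)%Z; lra.
  - apply conv_nonneg; auto.
Qed.

Lemma Zsum_dirac_le_1 a b : Zsum a b (fun n => if (n =? 0)%Z then 1 else 0) <= 1.
Proof.
  set (d := fun n => if (n =? 0)%Z then 1 else 0).
  assert (Hd : forall n, 0 <= d n) by (intros n; unfold d; destruct (n =? 0)%Z; lra).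
  apply Rle_trans with (Zsum (Z.min a 0) (Z.max b 0) d); [apply Zsum_widen; auto; lia|].
  rewrite (Zsum_split _ 0), (Zsum_split 0 1), Zsum_singleton by lia.
  rewrite (Zsum_ext _ (0 - 1) _ (fun _ => 0)), (Zsum_ext 1 _ _ (fun _ => 0)), !Zsum_0.
  - unfold d. simpl. lra.
  - intros n Hn. unfold d. destruct (Z.eqb_spec n 0); [lia|reflexivity].
  - intros n Hn. unfold d. destruct (Z.eqb_spec n 0); [lia|reflexivity].
Qed.

Lemma convpow_Zsum_le_1 m p : (forall n, 0 <= p n) -> (forall a b, Zsum a b p <= 1) ->
  forall L a b, Zsum a b (convpow m p L) <= 1.
Proof.
  intros Hp Hp1 L. induction L as [|L IH]; intros a b.
  - apply Zsum_dirac_le_1.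
  - rewrite <- (Rmult_1_r 1). apply conv_Zsum_le; auto. apply convpow_nonneg, Hp.
Qed.

Inductive sum_of_support (p : Z -> R) : nat -> Z -> Prop :=
| sum_of_support_0 : sum_of_support p 0 0
| sum_of_support_S L x y :
    sum_of_support p L x -> 0 < p y -> sum_of_support p (S L) (x + y).

Definition support_diff (p : Z -> R) (d : Z) : Prop :=
  exists L x, sum_of_support p L x /\ sum_of_support p L (x + d).

Section Support.

Variables (m : Z) (p : Z -> R).
Hypothesis p_nonneg : forall n, 0 <= p n.
Hypothesis p_below : forall n, (n < m)%Z -> p n = 0.

Lemma sum_of_support_add L x M y :
  sum_of_support p L x -> sum_of_support p M y -> sum_of_support p (L + M) (x + y).
Proof.
  intros Hx Hy. induction Hy as [|M y z Hy IH Hz].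
  - rewrite Nat.add_0_r, Z.add_0_r. exact Hx.
  - rewrite Nat.add_succ_r, Z.add_assoc. constructor; auto.
Qed.

Lemma support_diff_0 : support_diff p 0.
Proof. exists 0%nat, 0%Z. split; constructor. Qed.

Lemma support_diff_add d e : support_diff p d -> support_diff p e -> support_diff p (d + e).
Proof.
  intros [L [x [Hx Hxd]]] [M [y [Hy Hye]]]. exists (L + M)%nat, (x + y)%Z.
  split; [apply sum_of_support_add; auto|].
  replace (x + y + (d + e))%Z with (x + d + (y + e))%Z by ring. apply sum_of_support_add; auto.
Qed.

Lemma support_diff_opp d : support_diff p d -> support_diff p (- d).
Proof.
  intros [L [x [Hx Hxd]]]. exists L, (x + d)%Z. split; auto.
  replace (x + d + - d)%Z with x by ring. exact Hx.
Qed.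

Lemma support_diff_support a s : 0 < p a -> 0 < p s -> support_diff p (s - a).
Proof.
  intros Ha Hs. exists 1%nat, a. split.
  - rewrite <- (Z.add_0_l a). constructor; [constructor|exact Ha].
  - replace (a + (s - a))%Z with (0 + s)%Z by ring. constructor; [constructor|exact Hs].
Qed.

Lemma support_ge y : 0 < p y -> (m <= y)%Z.
Proof.
  intros Hy. destruct (Z_lt_le_dec y m) as [Hym|]; auto.
  rewrite p_below in Hy; [lra|exact Hym].
Qed.

Lemma sum_of_support_ge L x : sum_of_support p L x -> (Z.of_nat L * m <= x)%Z.
Proof.
  induction 1 as [|L x y Hx IH Hy]; [lia|]. pose proof (support_ge y Hy). lia.
Qed.

Lemma convpow_pos L x : sum_of_support p L x -> 0 < convpow m p L x.
Proof.
  intros Hx. induction Hx as [|L x y Hx IH Hy].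
  - simpl. lra.
  - pose proof (sum_of_support_ge L x Hx). pose proof (support_ge y Hy).
    apply Rlt_le_trans with (convpow m p L x * p (x + y - x)%Z).
    + replace (x + y - x)%Z with y by ring. apply Rmult_lt_0_compat; auto.
    + apply (Zsum_term_le _ _ x (fun k => convpow m p L k * p (x + y - k)%Z)); [|lia].
      intros k. apply Rmult_le_pos; auto. apply convpow_nonneg, p_nonneg.
Qed.

Lemma convpow_pos_consecutive : support_diff p 1 ->
  exists L x, (1 <= L)%nat /\ 0 < convpow m p L x /\ 0 < convpow m p L (x + 1)%Z.
Proof.
  intros [L [x [Hx Hx1]]]. exists L, x. split; [|split; apply convpow_pos; auto].
  destruct L; [|lia]. inversion Hx; inversion Hx1. lia.
Qed.

End Support.

Section ZSubgroup.

Variable P : Z -> Prop.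
Hypothesis P_0 : P 0%Z.
Hypothesis P_add : forall d e, P d -> P e -> P (d + e)%Z.
Hypothesis P_opp : forall d, P d -> P (- d)%Z.

Lemma Z_subgroup_mul z d : P d -> P (z * d)%Z.
Proof.
  intros Hd.
  assert (Hnat : forall k : nat, P (Z.of_nat k * d)%Z).
  { induction k as [|k IH]; [exact P_0|].
    replace (Z.of_nat (S k) * d)%Z with (Z.of_nat k * d + d)%Z by lia. auto. }
  destruct (Z_le_dec 0 z).
  - replace z with (Z.of_nat (Z.to_nat z)) by lia. apply Hnat.
  - replace (z * d)%Z with (- (Z.of_nat (Z.to_nat (- z)) * d))%Z by lia. auto.
Qed.

Lemma Z_subgroup_generator : exists g, (0 <= g)%Z /\ P g /\ forall d, P d -> (g | d)%Z.
Proof.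
  destruct (classic (exists d, P d /\ (0 < d)%Z)) as [[d0 [Hd0 Hd0pos]]|Hnone].
  - set (Q := fun n : nat => P (Z.of_nat (S n))).
    destruct (dec_inh_nat_subset_has_unique_least_element Q (fun n => classic (Q n)))
      as [n [[Hn Hmin] _]].
    { exists (Z.to_nat d0 - 1)%nat. unfold Q. replace (Z.of_nat (S _)) with d0 by lia. exact Hd0. }
    set (g := Z.of_nat (S n)) in *.
    exists g. split; [lia|]. split; [exact Hn|].
    intros d Hd. apply Z.mod_divide; [lia|].
    assert (Hr : P (d mod g)%Z).
    { rewrite Z.mod_eq by lia. apply P_add; [exact Hd|]. apply P_opp. rewrite Z.mul_comm. apply Z_subgroup_mul, Hn. }
    pose proof (Z.mod_pos_bound d g ltac:(lia)).
    destruct (Z.eq_dec (d mod g) 0) as [|Hr0]; [assumption|exfalso].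
    assert (HQ : Q (Z.to_nat (d mod g) - 1)%nat).
    { unfold Q. replace (Z.of_nat (S _)) with (d mod g)%Z by lia. exact Hr. }
    specialize (Hmin _ HQ). lia.
  - exists 0%Z. split; [lia|]. split; [exact P_0|].
    intros d Hd. replace d with 0%Z; [apply Z.divide_0_r|].
    destruct (Z.lt_trichotomy d 0) as [Hlt|[Heq|Hgt]]; [exfalso|auto|exfalso];
      apply Hnone; [exists (- d)%Z | exists d]; split; auto; lia.
Qed.

End ZSubgroup.

Lemma cos_sin_2kPI (k : Z) : cos (2 * IZR k * PI) = 1 /\ sin (2 * IZR k * PI) = 0.
Proof.
  assert (Hs : sin (IZR k * PI) = 0) by (apply sin_eq_0_1; exists k; reflexivity).
  replace (2 * IZR k * PI) with (2 * (IZR k * PI)) by ring.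
  rewrite cos_2a_sin, sin_2a, Hs. split; ring.
Qed.

Lemma cos_plus_2kPI x (k : Z) : cos (x + 2 * IZR k * PI) = cos x.
Proof. destruct (cos_sin_2kPI k) as [Hc Hs]. rewrite cos_plus, Hc, Hs. ring. Qed.

Lemma sin_plus_2kPI x (k : Z) : sin (x + 2 * IZR k * PI) = sin x.
Proof. destruct (cos_sin_2kPI k) as [Hc Hs]. rewrite sin_plus, Hc, Hs. ring. Qed.

Section Period.

Variables (p : Z -> R) (tau : R).
Hypothesis tau_pos : 0 < tau.
Hypothesis p_nonneg : forall n, 0 <= p n.
Hypothesis p_mass : Zseries p 1.
Hypothesis p_period : forall t : R, 0 < t < tau ->
  forall re im : R,
    Zseries (fun n => p n * cos (2 * PI * IZR n * t / tau)) re ->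
    Zseries (fun n => - (p n * sin (2 * PI * IZR n * t / tau))) im ->
    re ^ 2 + im ^ 2 <> 1.

Lemma support_nonempty : exists a, 0 < p a.
Proof.
  apply NNPP. intros Hno.
  assert (Hzero : forall n, p n = 0).
  { intros n. destruct (p_nonneg n) as [Hn|Hn]; [exfalso; eauto|auto]. }
  pose proof (Zseries_zero p 1 Hzero p_mass). lra.
Qed.

(* If the support lies in a + gZ, then at t = tau / g the characteristic function
   is the unimodular number e^{-2 i pi a / g}, so t would be a smaller period. *)
Lemma support_not_in_coset a g : (2 <= g)%Z -> ~ (forall s, 0 < p s -> (g | s - a)%Z).
Proof.
  intros Hg Hdiv. apply IZR_le in Hg.
  set (t := tau / IZR g). set (th := 2 * PI * IZR a / IZR g).
  assert (Ht : 0 < t < tau).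
  { assert (IZR g * t = tau) by (unfold t; field; lra). split; nra. }
  assert (Hphase : forall n, 0 < p n -> exists k, 2 * PI * IZR n * t / tau = th + 2 * IZR k * PI).
  { intros n Hn. destruct (Hdiv n Hn) as [k Hk]. exists k.
    replace n with (a + k * g)%Z by lia. rewrite plus_IZR, mult_IZR. unfold t, th. field. lra. }
  apply (p_period t Ht (cos th * 1) (- sin th * 1)).
  - replace (fun n => p n * cos (2 * PI * IZR n * t / tau)) with (fun n => cos th * p n).
    + apply Zseries_scal, p_mass.
    + apply functional_extensionality. intros n. destruct (p_nonneg n) as [Hn|Hn].
      * destruct (Hphase n Hn) as [k ->]. rewrite cos_plus_2kPI. ring.
      * rewrite <- Hn. ring.
  - replace (fun n => - (p n * sin (2 * PI * IZR n * t / tau))) with (fun n => - sin th * p n).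
    + apply Zseries_scal, p_mass.
    + apply functional_extensionality. intros n. destruct (p_nonneg n) as [Hn|Hn].
      * destruct (Hphase n Hn) as [k ->]. rewrite sin_plus_2kPI. ring.
      * rewrite <- Hn. ring.
  - pose proof (sin2_cos2 th) as Hpyth. unfold Rsqr in Hpyth. nra.
Qed.

Lemma support_coset_trivial a g :
  (0 <= g)%Z -> (forall s, 0 < p s -> (g | s - a)%Z) -> g = 1%Z.
Proof.
  intros Hg Hdiv. destruct (Z.eq_dec g 0) as [Hg0|Hg0].
  - exfalso. apply (support_not_in_coset a 2); [lia|]. intros s Hs.
    subst g. rewrite (Z.divide_0_l _ (Hdiv s Hs)). apply Z.divide_0_r.
  - destruct (Z.eq_dec g 1) as [|Hg1]; [assumption|].
    exfalso. apply (support_not_in_coset a g); [lia|exact Hdiv].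
Qed.

End Period.

Lemma Rabs_minus_Rmin u v : Rabs (u - v) = u + v - 2 * Rmin u v.
Proof. unfold Rmin. destruct (Rle_dec u v); [rewrite Rabs_left1 | rewrite Rabs_right]; lra. Qed.

Lemma total_variation_lt_2 q x :
  (forall n, 0 <= q n) -> (forall a b, Zsum a b q <= 1) -> 0 < q x -> 0 < q (x + 1)%Z ->
  exists S, Zseries (fun n => Rabs (q n - q (n + 1)%Z)) S /\ S < 2.
Proof.
  intros Hq Hq1 Hx Hx1.
  set (c := Rmin (q x) (q (x + 1)%Z)).
  assert (Hc : 0 < c) by (apply Rmin_glb_lt; assumption).
  assert (Hmin : forall n, 0 <= Rmin (q n) (q (n + 1)%Z)) by (intros; apply Rmin_glb; auto).
  destruct (Zseries_of_bounded_Zsum (fun n => Rabs (q n - q (n + 1)%Z)) (2 - 2 * c))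
    as [S [HS HSle]]; [intros; apply Rabs_pos| |exists S; split; [exact HS|lra]].
  intros a b.
  set (a' := Z.min a x). set (b' := Z.max b x).
  apply Rle_trans with (Zsum a' b' (fun n => Rabs (q n - q (n + 1)%Z))).
  { apply Zsum_widen; [intros; apply Rabs_pos|lia|lia]. }
  rewrite (Zsum_ext _ _ _ (fun n => (q n + q (n + 1)%Z) + -2 * Rmin (q n) (q (n + 1)%Z)))
    by (intros; rewrite Rabs_minus_Rmin; ring).
  rewrite !Zsum_plus, Zsum_scal, Zsum_shift.
  pose proof (Hq1 a' b'). pose proof (Hq1 (a' + 1)%Z (b' + 1)%Z).
  pose proof (Zsum_term_le a' b' x _ Hmin ltac:(lia)) as Hc_le. cbv beta in Hc_le. fold c in Hc_le. lra.
Qed.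

Theorem mainTheorem7 (p : Z -> R) (tau : R) (m : Z)
  (Htau : 0 < tau)
  (Hnonneg : forall n : Z, 0 <= p n)
  (Hnorm : Zseries p 1)
  (Hbelow : forall n : Z, (n < m)%Z -> p n = 0)
  (Hperiod : forall t : R, 0 < t < tau ->
     forall re im : R,
       Zseries (fun n => p n * cos (2 * PI * IZR n * t / tau)) re ->
       Zseries (fun n => - (p n * sin (2 * PI * IZR n * t / tau))) im ->
       re ^ 2 + im ^ 2 <> 1) :
  exists L : nat, (1 <= L)%nat /\
    exists S : R,
      Zseries (fun n => Rabs (convpow m p L n - convpow m p L (n + 1)%Z)) S /\
      S / 2 < 1.
Proof.
  destruct (support_nonempty p Hnonneg Hnorm) as [a Ha].
  destruct (Z_subgroup_generator (support_diff p) (support_diff_0 p)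
              (support_diff_add p) (support_diff_opp p)) as [g [Hg0 [Hg Hgdiv]]].
  assert (Hg1 : g = 1%Z).
  { apply (support_coset_trivial p tau Htau Hnonneg Hnorm Hperiod a g Hg0).
    intros s Hs. apply Hgdiv, support_diff_support; assumption. }
  subst g.
  destruct (convpow_pos_consecutive m p Hnonneg Hbelow Hg) as [L [x [HL [Hx Hx1]]]].
  exists L. split; [exact HL|].
  destruct (total_variation_lt_2 (convpow m p L) x) as [S [HS HS2]]; auto.
  - apply convpow_nonneg, Hnonneg.
  - apply convpow_Zsum_le_1; [exact Hnonneg|]. apply Zsum_le_Zseries; assumption.
  - exists S. split; [exact HS|lra].
Qed.
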